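(* Let $(\Omega,\mathcal F,P)$ be a probability space and let $(X_x)_{x\in\mathbb{R}}$ be a jointly measurable family of non-negative random variables which are identically distributed and non-trivial (i.e. $P(X_x>0)>0$). Let $f:\mathbb{R}\to[0,\infty)$ be measurable. If $P\big(\int_{\mathbb{R}} f(x)X_x\,dx<\infty\big)=1$, then $\int_{\mathbb{R}} f(x)\,dx<\infty$. *)

From HB Require Import structures.
From mathcomp Require Import all_boot all_order all_algebra.
From mathcomp Require Import all_classical all_reals all_analysis.
Set Implicit Arguments. Unset Strict Implicit. Unset Printing Implicit Defensive.
Import Order.TTheory GRing.Theory Num.Theory.
Local Open Scope classical_set_scope.
Local Open Scope ring_scope.

Definition identically_distributed (d : measure_display) (T : measurableType d)
  (R : realType) (P : probability T R) (I : Type) (X : I -> T -> R) : Prop :=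
  forall (x y : I) (B : set R), measurable B ->
    P (X x @^-1` B) = P (X y @^-1` B).

From HB Require Import structures.
From mathcomp Require Import all_boot all_order all_algebra.
From mathcomp Require Import all_classical all_reals all_analysis.
From mathcomp Require Import lra measurable_realfun.
(* Identical distribution and non-triviality give one level delta > 0 with
   P(X_x > delta) = p > 0 for every x, and a.s. finiteness of
   Y = int f(x) X_x dx gives M with P(Y <= M) > 1 - p/2.  On A = {Y <= M}
   Bonferroni yields P(A /\ X_x > delta) >= p/2, so by Tonelli
   (p/2) int f <= E[1_A int f(x) 1_{X_x > delta} dx] <= E[1_A Y] / delta
   <= M / delta. *)

Set Implicit Arguments.
Unset Strict Implicit.
Unset Printing Implicit Defensive.

Import Order.TTheory GRing.Theory Num.Theory.
Local Open Scope classical_set_scope.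
Local Open Scope ring_scope.

Section measure_lemmas.
Context d (T : measurableType d) (R : realType).

Lemma nondecreasing_bigcup_measure_gt (mu : {measure set T -> \bar R})
    (E : nat -> set T) (a : \bar R) :
  (forall n, measurable (E n)) -> nondecreasing_seq E ->
  (a < mu (\bigcup_n E n))%E -> exists n, (a < mu (E n))%E.
Proof.
move=> mE ndE.
have mUE : measurable (\bigcup_n E n) by exact: bigcupT_measurable.
have ndmuE : {homo mu \o E : m n / (m <= n)%N >-> (m <= n)%E}.
  by move=> m n mn; apply: le_measure; rewrite ?inE //; exact/subsetPset/ndE.
have -> : mu (\bigcup_n E n) = ereal_sup (range (mu \o E)).
  apply: (cvg_unique (@ereal_hausdorff R) (nondecreasing_cvg_mu mE mUE ndE)).
  exact: ereal_nondecreasing_cvgn.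
by move=> /ereal_sup_gt [_ [n _ <-]]; exists n.
Qed.

Lemma measure_level_gt0 (mu : {measure set T -> \bar R}) (g : T -> R) :
  measurable_fun setT g -> (0 < mu [set w | (0 < g w)%R])%E ->
  exists2 delta : R, 0 < delta & (0 < mu (g @^-1` `]delta, +oo[))%E.
Proof.
move=> mg; pose E n := g @^-1` `](n.+1%:R)^-1, +oo[.
have mE n : measurable (E n).
  by rewrite -[E n]setTI; apply: mg => //; exact: measurable_itv.
have ndE : nondecreasing_seq E.
  move=> m n mn; apply/subsetPset => w.
  rewrite /E /preimage /= !in_itv /= !andbT.
  by apply: le_lt_trans; rewrite lef_pV2 ?posrE // ler_nat ltnS.
have -> : [set w | 0 < g w] = \bigcup_n E n.
  apply/seteqP; split=> w /=; last first.
    by move=> [n _]; rewrite /E /preimage /= in_itv /= andbT; apply: lt_trans.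
  move=> gw; exists (Num.Def.truncn (g w)^-1) => //.
  rewrite /E /preimage /= in_itv /= andbT -[X in _ < X]invrK.
  by rewrite ltf_pV2 ?posrE ?invr_gt0 // truncnS_gt.
case/(nondecreasing_bigcup_measure_gt mE ndE) => n muEn.
by exists (n.+1%:R)^-1; rewrite ?invr_gt0.
Qed.

Lemma integral_indic_level_le (mu : {measure set T -> \bar R}) (h g : T -> R)
    (delta : R) :
  measurable_fun setT h -> measurable_fun setT g ->
  (forall x, 0 <= h x) -> (forall x, 0 <= g x) -> 0 < delta ->
  (\int[mu]_x (h x * \1_`]delta, +oo[ (g x))%:E <=
   delta^-1%:E * \int[mu]_x (h x * g x)%:E)%E.
Proof.
move=> mh mg h_ge0 g_ge0 delta_gt0.
have mhg : measurable_fun setT (fun x => (h x * g x)%:E).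
  by apply/measurable_EFinP; exact: measurable_funM.
rewrite -ge0_integralZl //; last 2 first.
- by move=> x _; rewrite lee_fin mulr_ge0.
- by rewrite lee_fin invr_ge0 ltW.
apply: ge0_le_integral => //.
- by move=> x _; rewrite lee_fin mulr_ge0 // indicE.
- apply/measurable_EFinP; apply: measurable_funM => //.
  by apply: measurableT_comp mg; apply: measurable_indic; exact: measurable_itv.
- exact: measurable_funeM.
move=> x _; rewrite -EFinM lee_fin indicE /=.
have [delta_lt_gx|gx_le_delta] := ltP delta (g x).
  rewrite mem_set /=; last by rewrite in_itv /= andbT.
  by rewrite mulr1n mulr1 mulrCA ler_peMr // ler_pdivlMl // mulr1 ltW.
rewrite memNset /=; last by rewrite in_itv /= andbT ltNge gx_le_delta.
by rewrite mulr0 !mulr_ge0 // invr_ge0 ltW.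
Qed.

End measure_lemmas.

Section probability_lemmas.
Context d (T : measurableType d) (R : realType) (P : probability T R).

Let probability_fineK {A : set T} : measurable A -> P A = (fine (P A))%:E.
Proof. by move=> mA; rewrite fineK // fin_num_measure. Qed.

Lemma probability_setI_ge (A B : set T) :
  measurable A -> measurable B -> (P A + P B - 1 <= P (A `&` B))%E.
Proof.
move=> mA mB.
have mBA : measurable (B `\` A) by exact: measurableD.
have mAB : measurable (A `&` B) by exact: measurableI.
have PB : P B = (P (B `\` A) + P (A `&` B))%E.
  by rewrite setIC; exact: measureDI.
have PBA : (P (B `\` A) <= 1 - P A)%E.
  rewrite -probability_setC //; apply: le_measure; rewrite ?inE //.
  exact: measurableC.
move: PBA; rewrite PB (probability_fineK mA) (probability_fineK mBA).
rewrite (probability_fineK mAB) -[1%E]/(1%:E) -!EFinD !lee_fin; lra.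
Qed.

Lemma probability_finite_tight (Y : T -> \bar R) (eps : R) :
  measurable_fun setT Y -> P [set w | (Y w < +oo)%E] = 1%E -> 0 < eps ->
  exists2 M : R, 0 <= M & ((1 - eps)%:E < P [set w | (Y w <= M%:E)%E])%E.
Proof.
move=> mY PYfin eps_gt0; pose A n := [set w | (Y w <= n%:R%:E)%E].
have mA n : measurable (A n).
  by rewrite -[A n]setTI; exact: measurable_lee mY (measurable_cst _).
have ndA : nondecreasing_seq A.
  move=> m n mn; apply/subsetPset => w; rewrite /A /= => /le_trans; apply.
  by rewrite lee_fin ler_nat.
have UA : \bigcup_n A n = [set w | (Y w < +oo)%E].
  apply/seteqP; split=> w /=.
    by move=> [n _]; rewrite /A /= => /le_lt_trans; apply; rewrite ltry.
  case Yw: (Y w) => [r| |] // _.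
    exists (Num.Def.truncn r).+1 => //.
    by rewrite /A /= Yw lee_fin ltW ?truncnS_gt.
  by exists 0%N => //; rewrite /A /= Yw leNye.
have : ((1 - eps)%:E < P (\bigcup_n A n))%E by rewrite UA PYfin lte_fin; lra.
by case/(nondecreasing_bigcup_measure_gt mA ndA) => n; exists n%:R.
Qed.

End probability_lemmas.

Section tonelli_level.
Context d1 d2 (T1 : measurableType d1) (T2 : measurableType d2) (R : realType).
Variables (mu : {sigma_finite_measure set T1 -> \bar R}) (P : probability T2 R).
Variables (X : T1 -> T2 -> R) (f : T1 -> R).
Hypothesis mX : measurable_fun setT (fun z : T1 * T2 => X z.1 z.2).
Hypothesis X_ge0 : forall x w, 0 <= X x w.
Hypothesis mf : measurable_fun setT f.
Hypothesis f_ge0 : forall x, 0 <= f x.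

Lemma integral_level_bound (A : set T2) (delta c M : R) :
  measurable A -> 0 < delta -> 0 <= c -> 0 <= M ->
  (forall x, c%:E <= P (A `&` X x @^-1` `]delta, +oo[))%E ->
  (forall w, A w -> \int[mu]_x (f x * X x w)%:E <= M%:E)%E ->
  (c%:E * \int[mu]_x (f x)%:E <= (M / delta)%:E)%E.
Proof.
move=> mA delta_gt0 c_ge0 M_ge0 PA_ge YA_le.
have mI : measurable (`]delta, +oo[ : set R) by exact: measurable_itv.
have mAX x : measurable (A `&` X x @^-1` `]delta, +oo[).
  apply: measurableI => //; rewrite -[_ @^-1` _]setTI.
  exact: (measurableT_comp mX (pair1_measurable x)).
pose g z := (f z.1 * \1_A z.2 * \1_`]delta, +oo[ (X z.1 z.2))%:E.
have mg : measurable_fun setT g.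
  apply/measurable_EFinP; apply: measurable_funM; first apply: measurable_funM.
  - exact: measurableT_comp mf measurable_fst.
  - by apply: measurableT_comp measurable_snd; exact: measurable_indic.
  - by apply: measurableT_comp mX; exact: measurable_indic.
have g_ge0 z : (0 <= g z)%E by rewrite lee_fin !mulr_ge0.
have gP x :
    (\int[P]_w g (x, w) = (f x)%:E * P (A `&` X x @^-1` `]delta, +oo[))%E.
  have indicAI w : \1_A w * \1_`]delta, +oo[ (X x w) =
      \1_(A `&` X x @^-1` `]delta, +oo[) w :> R by rewrite indicI.
  under eq_integral => w _ do rewrite /g /= -mulrA indicAI EFinM.
  rewrite ge0_integralZl ?lee_fin // ?integral_indic ?setIT //.
  by apply/measurable_EFinP; exact: measurable_indic.
have gmu w : (\int[mu]_x g (x, w) <= (M / delta)%:E)%E.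
  have [Aw|nAw] := pselect (A w); last first.
    rewrite integral0_eq ?lee_fin ?divr_ge0 ?(ltW delta_gt0) // => x _.
    by rewrite /g indicE memNset ?mulr0 ?mul0r.
  under eq_integral => x _ do rewrite /g /= indicE mem_set // mulr1.
  apply: le_trans (integral_indic_level_le _ mf _ f_ge0 _ delta_gt0) _ => //.
    exact: (measurableT_comp mX (pair2_measurable w)).
  by rewrite mulrC EFinM lee_wpmul2l ?YA_le // lee_fin invr_ge0 ltW.
have mgP : measurable_fun setT (fun x => \int[P]_w g (x, w))%E.
  exact: measurable_fun_fubini_tonelli_F.
apply: (@le_trans _ _ (\int[mu]_x \int[P]_w g (x, w))%E).
  rewrite -ge0_integralZl //; last 2 first.
  - exact/measurable_EFinP.
  - by move=> x _; rewrite lee_fin.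
  apply: ge0_le_integral => //.
  - by move=> x _; rewrite -EFinM lee_fin mulr_ge0.
  - exact/measurable_funeM/measurable_EFinP.
  by move=> x _; rewrite gP muleC lee_wpmul2l ?lee_fin.
rewrite fubini_tonelli //.
apply: (@le_trans _ _ (\int[P]_w (M / delta)%:E)%E).
  apply: ge0_le_integral => //.
  - by move=> w _; exact: integral_ge0.
  - exact: measurable_fun_fubini_tonelli_G.
rewrite integral_cst // (_ : _ [set: T2] = 1%E) ?mule1 //.
exact: probability_setT.
Qed.

End tonelli_level.

Theorem lemma1 (R : realType) (d : measure_display) (T : measurableType d)
  (P : probability T R) (X : R -> T -> R) (f : R -> R)
  (hXmeas : measurable_fun setT (fun p : R * T => X p.1 p.2))
  (hXnn : forall x w, 0 <= X x w)
  (hXid : identically_distributed P X)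
  (hXnt : forall x, (0 < P [set w | (0 < X x w)%R])%E)
  (hfmeas : measurable_fun setT f)
  (hfnn : forall x, 0 <= f x)
  (hfin : P [set w | (\int[lebesgue_measure]_x (f x * X x w)%:E < +oo)%E] = 1%E) :
  (\int[lebesgue_measure]_x (f x)%:E < +oo)%E.
Proof.
have mXx x : measurable_fun setT (X x).
  exact: measurableT_comp hXmeas (pair1_measurable x).
have [delta delta_gt0 PX0_gt0] := measure_level_gt0 (mXx 0) (hXnt 0).
have mB x : measurable (X x @^-1` `]delta, +oo[).
  by rewrite -[_ @^-1` _]setTI; apply: mXx => //; exact: measurable_itv.
pose p := fine (P (X 0 @^-1` `]delta, +oo[)).
have PB x : P (X x @^-1` `]delta, +oo[) = p%:E.
  by rewrite (hXid x 0) ?fineK ?fin_num_measure //; exact: measurable_itv.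
have p_gt0 : 0 < p by rewrite -lte_fin -(PB 0).
pose Y w := (\int[lebesgue_measure]_x (f x * X x w)%:E)%E.
have mfX : measurable_fun setT (fun z : R * T => (f z.1 * X z.1 z.2)%:E).
  apply/measurable_EFinP; apply: measurable_funM => //.
  exact: measurableT_comp hfmeas measurable_fst.
have mY : measurable_fun setT Y.
  apply: (measurable_fun_fubini_tonelli_G (m1 := lebesgue_measure) _ mfX).
  by move=> z; rewrite lee_fin mulr_ge0.
have p2_gt0 : 0 < p / 2 by rewrite divr_gt0.
have [M M_ge0 PA_gt] := probability_finite_tight mY hfin p2_gt0.
set A := [set w | (Y w <= M%:E)%E] in PA_gt.
have mA : measurable A.
  by rewrite -[A]setTI; exact: measurable_lee mY (measurable_cst _).
have PAB x : ((p / 2)%:E <= P (A `&` X x @^-1` `]delta, +oo[))%E.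
  apply: le_trans (probability_setI_ge P mA (mB x)).
  move: PA_gt; rewrite PB -(fineK (fin_num_measure P _ mA)) -[1%E]/(1%:E).
  by rewrite -!EFinD !lte_fin lee_fin => ?; lra.
have := integral_level_bound (mu := lebesgue_measure) hXmeas hXnn hfmeas hfnn
  mA delta_gt0 (ltW p2_gt0) M_ge0 PAB (fun w Aw => Aw).
rewrite ltey; apply: contraTN => /eqP ->.
by rewrite gt0_muley ?lte_fin // leye_eq.
Qed.
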